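(* Let $\mathcal{M},\mathcal{Y},\mathcal{S}'$ be finite sets and $\{g_{s'}\}_{s'\in\mathcal{S}'}$, $g_{s'}:\mathcal{M}\times\mathcal{Y}\to\mathcal{Y}$, a family such that (i) $\Pr_{S'}[g_{S'}(m,y)=g_{S'}(\hat m,\hat y)]\le1/|\mathcal{Y}|$ for all $(m,y)\ne(\hat m,\hat y)$ when $S'$ is uniform on $\mathcal{S}'$, and (ii) for every $m\in\mathcal{M}$, $c\in\mathcal{Y}$, $s'\in\mathcal{S}'$ there is a unique $y\in\mathcal{Y}$ with $g_{s'}(m,y)=c$. Let $M'=(M,Y)$ be uniformly distributed on $\mathcal{M}\times\mathcal{Y}$ and correlated with a quantum system $E'$ via the cq state $\rho_{M'E'}=\sum_{m,y}\frac{1}{|\mathcal{M}||\mathcal{Y}|}|m,y\rangle\langle m,y|\otimes\rho_{E'}^{m,y}$. Let $S'$ be uniform on $\mathcal{S}'$ and independent of $(M',E')$, and $C:=g_{S'}(M,Y)$. Then $$d(M;E'S'C)\le d(M';E').$$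
   Context: For a cq state $\rho_{VF}=\sum_vP_V(v)|v\rangle\langle v|\otimes\rho_F^v$ with $V$ taking values in a finite set $\mathcal{V}$, $d(V;F):=\min_{\sigma_F}\|\rho_{VF}-P_{\mathcal{V}}\otimes\sigma_F\|_1$, where $P_{\mathcal{V}}$ is the uniform distribution on $\mathcal{V}$ (as a diagonal density operator) and the minimum is over states $\sigma_F$. In $d(M;E'S'C)$ the system consists of $E'$ together with classical registers holding $S'$ and $C$. *)

(* Complex numbers: R[i] (mathcomp-real-closed
   'complex') over an arbitrary realType R; operators on finite-dimensional Hilbert
   spaces are square matrices over R[i]; tensor product is mxtens' Kronecker product
   [*t]; conjugate transpose is spectral.v's  M ^t*. *)
From HB Require Import structures.
From mathcomp Require Import all_boot all_order all_algebra.
From mathcomp Require Import all_classical all_reals.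
From mathcomp Require Import complex mxtens spectral.

Set Implicit Arguments.
Unset Strict Implicit.
Unset Printing Implicit Defensive.

Import Order.TTheory GRing.Theory Num.Theory.
Local Open Scope ring_scope.
Local Open Scope sesquilinear_scope.
Local Open Scope classical_set_scope.

Section QDefs.
Variable R : realType.
Local Notation C := R[i].

Definition psdmx n (A : 'M[C]_n) : Prop :=
  A ^t* = A /\ forall u : 'rV[C]_n, 0 <= (u *m A *m u ^t*) 0 0.

Definition density n (A : 'M[C]_n) : Prop := psdmx A /\ \tr A = 1.

Definition msqrt n (A : 'M[C]_n) : 'M[C]_n :=
  xget 0 [set P | psdmx P /\ P *m P = A].

Definition trnorm n (A : 'M[C]_n) : R := complex.Re (\tr (msqrt (A ^t* *m A))).

Definition ketbra (T : finType) (t : T) : 'M[C]_#|T| :=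
  delta_mx (enum_rank t) (enum_rank t).

Definition unif_op (T : finType) : 'M[C]_#|T| :=
  \sum_(t : T) (#|T|%:R)^-1 *: ketbra t.

(* d(V;F) = min_{sigma_F} || rho_VF - P_V (x) sigma_F ||_1  (taken as an infimum,
   the minimum being attained) *)
Definition dunif (V : finType) n (rhoVF : 'M[C]_(#|V| * n)) : R :=
  inf [set x : R | exists sigma : 'M[C]_n,
                     density sigma /\ x = trnorm (rhoVF - unif_op V *t sigma)].

End QDefs.

Arguments ketbra {R T} t.
Arguments unif_op {R} T.
Arguments dunif {R V n} rhoVF.
Arguments trnorm {R n} A.
Arguments density {R n} A.
Arguments psdmx {R n} A.
Arguments msqrt {R n} A.

(* For a seed s, the map |m,y>|e> |-> |m>|e>|s>|g_s(m,y)> is an isometry V_s, since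
   g_s(m,.) is injective by (ii), and the V_s have pairwise orthogonal ranges because
   the seed register records s.  Hence Phi(X) = |S|^-1 sum_s V_s X V_s^* satisfies
   Phi(X)^* Phi(X) = |S|^-1 Phi(X^* X) = Phi(sqrt(X^* X))^2, so by uniqueness of
   positive square roots Phi preserves the trace norm.  Phi maps rho_{M'E'} to
   rho_{ME'S'C} and, g_s(m,.) being a bijection, P_{MxY} (x) sigma to P_M (x) sigma'
   for the state sigma' = (|S||Y|)^-1 sum_{s,c} sigma (x) |s><s| (x) |c><c|.  So every
   candidate sigma in the infimum defining d(M';E') yields a candidate sigma' for
   d(M;E'S'C) of the same value. *)

From HB Require Import structures.
From mathcomp Require Import all_boot all_order all_algebra.
From mathcomp Require Import all_classical all_reals.
From mathcomp Require Import complex mxtens spectral.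
Import Order.TTheory GRing.Theory Num.Theory.
Local Open Scope ring_scope.
Local Open Scope sesquilinear_scope.

Set Implicit Arguments.
Unset Strict Implicit.
Unset Printing Implicit Defensive.

Section Matrices.
Variable R : realType.
Local Notation C := R[i].

Lemma adjmxM m n p (A : 'M[C]_(m, n)) (B : 'M[C]_(n, p)) :
  (A *m B) ^t* = B ^t* *m A ^t*.
Proof. by rewrite trmx_mul map_mxM. Qed.

Lemma adjmxB m n (A B : 'M[C]_(m, n)) : (A - B) ^t* = A ^t* - B ^t*.
Proof. by rewrite linearB map_mxB. Qed.

Lemma adjmxZ m n c (A : 'M[C]_(m, n)) : (c *: A) ^t* = c^* *: A ^t*.
Proof. by rewrite linearZ map_mxZ. Qed.

Lemma adjmx_sum (I : finType) m n (F : I -> 'M[C]_(m, n)) :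
  (\sum_i F i) ^t* = \sum_i (F i) ^t*.
Proof. by rewrite linear_sum map_mx_sum. Qed.

Lemma adjmx_delta m n (i : 'I_m) (j : 'I_n) :
  (delta_mx i j : 'M[C]_(m, n)) ^t* = delta_mx j i.
Proof. by apply/matrixP => a b; rewrite !mxE rmorph_nat andbC. Qed.

Definition sandwich m n (W : 'M[C]_(m, n)) (Y : 'M[C]_n) : 'M[C]_m :=
  W *m Y *m W ^t*.

Fact sandwich_is_linear m n (W : 'M[C]_(m, n)) : linear (sandwich W).
Proof. by move=> c A B; rewrite /sandwich mulmxDr mulmxDl -scalemxAr -scalemxAl. Qed.

HB.instance Definition _ m n (W : 'M[C]_(m, n)) :=
  GRing.isLinear.Build C 'M[C]_n 'M[C]_m *:%R (sandwich W) (sandwich_is_linear W).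

Lemma selfadj_normalmx n (A : 'M[C]_n) : A ^t* = A -> A \is normalmx.
Proof. by move=> AA; apply/normalmxP; rewrite AA. Qed.

Lemma spectral_rowP n (A : 'M[C]_n) i : A \is normalmx ->
  let u := row i (spectralmx A) in
  u *m A = spectral_diag A 0 i *: u /\ (u *m u ^t*) 0 0 = 1.
Proof.
move=> /orthomx_spectralP AE u; have U_unitary := spectral_unitarymx A.
have /unitarymxP UU := U_unitary; split.
  rewrite /u !rowE -mulmxA {2}AE invmx_unitary // !mulmxA.
  by rewrite -(mulmxA _ (spectralmx A)) UU mulmx1 -rowE row_diag_mx scalemxAl.
have -> : (u *m u ^t*) 0 0 = (spectralmx A *m (spectralmx A) ^t*) i i.
  by rewrite !mxE; apply: eq_bigr => k _; rewrite !mxE.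
by rewrite UU mxE eqxx.
Qed.

Lemma eigen_form n (A : 'M[C]_n) (u : 'rV[C]_n) d :
  u *m A = d *: u -> (u *m u ^t*) 0 0 = 1 -> (u *m A *m u ^t*) 0 0 = d.
Proof. by move=> uA uu; rewrite uA -scalemxAl mxE uu mulr1. Qed.

Lemma psdmx_diag_ge0 n (P : 'M[C]_n) i : psdmx P -> 0 <= P i i.
Proof.
by case=> _ /(_ (delta_mx 0 i)); rewrite adjmx_delta -rowE -colE !mxE.
Qed.

Lemma psdmx_sandwich m n (W : 'M[C]_(m, n)) (Y : 'M[C]_n) :
  psdmx Y -> psdmx (sandwich W Y).
Proof.
rewrite /sandwich; case=> YY Y_ge0; split; first by rewrite !adjmxM trmxCK YY mulmxA.
by move=> u; rewrite !mulmxA -(mulmxA _ (W ^t*)) -adjmxM; apply: Y_ge0.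
Qed.

Lemma psdmxZ n c (Y : 'M[C]_n) : 0 <= c -> psdmx Y -> psdmx (c *: Y).
Proof.
move=> c_ge0 [YY Y_ge0]; split; first by rewrite adjmxZ YY geC0_conj.
by move=> u; rewrite -scalemxAr -scalemxAl mxE mulr_ge0.
Qed.

Lemma psdmx_sum (I : finType) n (F : I -> 'M[C]_n) :
  (forall i, psdmx (F i)) -> psdmx (\sum_i F i).
Proof.
move=> F_psd; split.
  by rewrite adjmx_sum; apply: eq_bigr => i _; case: (F_psd i).
move=> u; rewrite mulmx_sumr mulmx_suml summxE sumr_ge0 // => i _.
by case: (F_psd i) => _; apply.
Qed.

Lemma psdmx_diag_mx n (d : 'rV[C]_n) : (forall k, 0 <= d 0 k) -> psdmx (diag_mx d).
Proof.
move=> d_ge0; split.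
  apply/matrixP => i j; rewrite !mxE eq_sym.
  by case: eqP => [->|_]; rewrite ?mulr1n ?mulr0n ?rmorph0 // geC0_conj.
move=> u; rewrite mul_mx_diag !mxE sumr_ge0 // => k _; rewrite !mxE.
by rewrite mulrAC mulr_ge0 // mul_conjC_ge0.
Qed.

Lemma psdmx_adjmx_mul m n (A : 'M[C]_(m, n)) : psdmx (A ^t* *m A).
Proof.
split; first by rewrite adjmxM trmxCK.
move=> u; rewrite mulmxA -mulmxA.
have -> : A *m u ^t* = (u *m A ^t*) ^t* by rewrite adjmxM trmxCK.
by rewrite !mxE sumr_ge0 // => k _; rewrite !mxE mul_conjC_ge0.
Qed.

Lemma psdmx_sqrt_uniq n (P Q : 'M[C]_n) :
  psdmx P -> psdmx Q -> P *m P = Q *m Q -> P = Q.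
Proof.
case=> PP P_ge0 [QQ Q_ge0] PQ; set A := P - Q.
have AA : A ^t* = A by rewrite adjmxB PP QQ.
have A_normal := selfadj_normalmx AA.
suff d0 : spectral_diag A = 0.
  apply/eqP; rewrite -subr_eq0 -/A (orthomx_spectralP A_normal) d0.
  by rewrite linear0 mulmx0 mul0mx.
apply/rowP => i; rewrite [RHS]mxE.
have [uA uu] := spectral_rowP i A_normal.
move: uA uu; set u := row i _; set d := spectral_diag A 0 i => uA uu.
set p := (u *m P *m u ^t*) 0 0; set q := (u *m Q *m u ^t*) 0 0.
have p_ge0 : 0 <= p := P_ge0 u.
have q_ge0 : 0 <= q := Q_ge0 u.
have d_pq : d = p - q.
  by rewrite -(eigen_form uA uu) mulmxBr mulmxBl mxE [X in _ + X]mxE.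
have d_real : d^* = d by rewrite d_pq rmorphB /= !geC0_conj.
(* 0 = u (P^2 - Q^2) u^* = u (P A + A Q) u^* = d (p + q) with p, q >= 0 and d = p - q *)
have Au : A *m u ^t* = d^* *: u ^t* by rewrite -{1}AA -adjmxM uA adjmxZ.
have PA : (u *m (P *m A) *m u ^t*) 0 0 = d^* * p.
  by rewrite !mulmxA -(mulmxA _ A) Au -scalemxAr mxE.
have AQ : (u *m (A *m Q) *m u ^t*) 0 0 = d * q.
  by rewrite !mulmxA uA -!scalemxAl mxE.
have : (u *m (P *m A + A *m Q) *m u ^t*) 0 0 = 0.
  by rewrite mulmxBr mulmxBl addrA subrK PQ subrr mulmx0 mul0mx mxE.
rewrite mulmxDr mulmxDl mxE PA AQ d_real -mulrDr => /eqP.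
rewrite mulf_eq0 => /orP[/eqP //|].
by rewrite (paddr_eq0 p_ge0 q_ge0) => /andP[/eqP p0 /eqP q0]; rewrite d_pq p0 q0 subrr.
Qed.

Lemma psdmx_sqrt_exists n (B : 'M[C]_n) :
  psdmx B -> exists P, psdmx P /\ P *m P = B.
Proof.
move=> B_psd; have [BB B_ge0] := B_psd.
have B_normal := selfadj_normalmx BB.
have BE := orthomx_spectralP B_normal.
set U := spectralmx B in BE; set d := spectral_diag B in BE.
have U_unitary : U \is unitarymx := spectral_unitarymx B.
have d_ge0 k : 0 <= d 0 k.
  by have [uB uu] := spectral_rowP k B_normal; rewrite -(eigen_form uB uu).
set s := \row_k sqrtC (d 0 k).
have s_ge0 k : 0 <= s 0 k by rewrite mxE sqrtC_ge0.
exists (U ^t* *m diag_mx s *m U); split.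
  by rewrite -{2}[U]trmxCK; apply/psdmx_sandwich/psdmx_diag_mx.
have ss : diag_mx s *m diag_mx s = diag_mx d.
  by rewrite mulmx_diag; congr diag_mx; apply/rowP => k; rewrite !mxE -expr2 sqrtCK.
rewrite BE (invmx_unitary U_unitary) !mulmxA (mulmxtVK _ U_unitary).
by rewrite -(mulmxA (U ^t*)) ss.
Qed.

Lemma msqrtP n (B : 'M[C]_n) :
  psdmx B -> psdmx (msqrt B) /\ msqrt B *m msqrt B = B.
Proof. by move=> /psdmx_sqrt_exists B_sqrt; apply: (xgetPex 0 B_sqrt). Qed.

Lemma trnormE n (A P : 'M[C]_n) :
  psdmx P -> P *m P = A ^t* *m A -> trnorm A = complex.Re (\tr P).
Proof.
move=> P_psd PP; have [sqrt_psd sqrtK] := msqrtP (psdmx_adjmx_mul A).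
by rewrite /trnorm (psdmx_sqrt_uniq sqrt_psd P_psd) // sqrtK PP.
Qed.

Lemma trnorm_ge0 n (A : 'M[C]_n) : 0 <= trnorm A.
Proof.
have [sqrt_psd _] := msqrtP (psdmx_adjmx_mul A).
have : 0 <= \tr (msqrt (A ^t* *m A)).
  by apply: sumr_ge0 => i _; apply: psdmx_diag_ge0.
by rewrite lecE => /andP[].
Qed.

Section IsometricMixture.
Variables (S : finType) (n n' : nat) (V : S -> 'M[C]_(n', n)).
Local Notation k := (#|S|%:R : C).

Definition isomix (Y : 'M[C]_n) : 'M[C]_n' := \sum_s k^-1 *: sandwich (V s) Y.

Fact isomix_is_linear : linear isomix.
Proof.
move=> c A B; rewrite /isomix scaler_sumr -big_split; apply: eq_bigr => s _ /=.
by rewrite linearP scalerDr !scalerA mulrC.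
Qed.

HB.instance Definition _ :=
  GRing.isLinear.Build C 'M[C]_n 'M[C]_n' *:%R isomix isomix_is_linear.

Lemma isomix_psd (Y : 'M[C]_n) : psdmx Y -> psdmx (isomix Y).
Proof.
move=> Y_psd; apply: psdmx_sum => s; apply: psdmxZ; last exact: psdmx_sandwich.
by rewrite invr_ge0 ler0n.
Qed.

Lemma isomix_adj (Y : 'M[C]_n) : (isomix Y) ^t* = isomix (Y ^t*).
Proof.
rewrite adjmx_sum; apply: eq_bigr => s _.
by rewrite adjmxZ fmorphV /= conjC_nat /sandwich !adjmxM trmxCK mulmxA.
Qed.

Hypothesis V_orth : forall s t, (V s) ^t* *m V t = if s == t then 1%:M else 0.

Lemma isomixM (Y Z : 'M[C]_n) : isomix Y *m isomix Z = k^-1 *: isomix (Y *m Z).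
Proof.
rewrite /isomix /sandwich mulmx_suml scaler_sumr; apply: eq_bigr => s _.
rewrite mulmx_sumr (bigD1 s) //= big1 ?addr0 => [|t ts].
  rewrite -scalemxAl -scalemxAr !scalerA !mulmxA -(mulmxA _ _ (V s)) V_orth eqxx.
  by rewrite mulmx1 -!mulmxA.
rewrite -scalemxAl -scalemxAr !mulmxA -(mulmxA _ ((V s) ^t*)) V_orth eq_sym.
by rewrite (negbTE ts) mulmx0 !mul0mx !scaler0.
Qed.

Lemma isomix_tr (Y : 'M[C]_n) : (0 < #|S|)%N -> \tr (isomix Y) = \tr Y.
Proof.
move=> S_gt0; rewrite /isomix raddf_sum /=.
under eq_bigr do rewrite mxtraceZ mxtrace_mulC mulmxA V_orth eqxx mul1mx.
by rewrite sumr_const -[#|_|]/#|S| -mulrnAl -mulr_natr mulVf ?mul1r // pnatr_eq0 -lt0n.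
Qed.

Lemma trnorm_isomix (X : 'M[C]_n) : (0 < #|S|)%N -> trnorm (isomix X) = trnorm X.
Proof.
move=> S_gt0; have [P_psd PP] := msqrtP (psdmx_adjmx_mul X).
set P := msqrt _ in P_psd PP.
have mixPP : isomix P *m isomix P = (isomix X) ^t* *m isomix X.
  by rewrite isomix_adj !isomixM PP.
by rewrite (trnormE P_psd PP) (trnormE (isomix_psd P_psd) mixPP) isomix_tr.
Qed.

End IsometricMixture.

Definition injmx n n' (f : 'I_n -> 'I_n') : 'M[C]_(n', n) :=
  \matrix_(i, j) (i == f j)%:R.

Lemma injmx_delta m n n' (f : 'I_n -> 'I_n') (j : 'I_n) (l : 'I_m) :
  injmx f *m delta_mx j l = delta_mx (f j) l.
Proof.
apply/matrixP => i k; rewrite mxE (bigD1 j) //= big1 ?addr0 => [|j' /negbTE j'j].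
  by rewrite !mxE eqxx -natrM mulnb.
by rewrite !mxE j'j mulr0.
Qed.

Lemma delta_adj_injmx m n n' (f : 'I_n -> 'I_n') (i : 'I_m) (j : 'I_n) :
  delta_mx i j *m (injmx f) ^t* = delta_mx i (f j).
Proof.
by rewrite -[LHS]trmxCK adjmxM trmxCK adjmx_delta (injmx_delta f) adjmx_delta.
Qed.

Lemma sandwich_injmx_delta n n' (f : 'I_n -> 'I_n') (j j' : 'I_n) :
  sandwich (injmx f) (delta_mx j j') = delta_mx (f j) (f j').
Proof. by rewrite /sandwich injmx_delta delta_adj_injmx. Qed.

Lemma sandwich_injmx n n' (f : 'I_n -> 'I_n') (A : 'M[C]_n) :
  sandwich (injmx f) A = \sum_e \sum_e' A e e' *: delta_mx (f e) (f e').
Proof.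
rewrite {1}[A]matrix_sum_delta linear_sum; apply: eq_bigr => e _.
rewrite linear_sum; apply: eq_bigr => e' _.
by rewrite linearZ /= sandwich_injmx_delta.
Qed.

Lemma injmx_orth (S : finType) n n' (f : S -> 'I_n -> 'I_n') :
  (forall s t j j', (f s j == f t j') = (s == t) && (j == j')) ->
  forall s t, (injmx (f s)) ^t* *m injmx (f t) = if s == t then 1%:M else 0.
Proof.
move=> f_inj s t; apply/matrixP => j j'; rewrite !mxE (bigD1 (f s j)) //=.
rewrite big1 => [|i /negbTE i_neq]; last by rewrite !mxE i_neq rmorph0 mul0r.
rewrite !mxE eqxx rmorph1 mul1r addr0 f_inj.
by case: (s == t); rewrite ?mxE // mulr0n.
Qed.

End Matrices.

Lemma mxtens_index_inj m n : injective (@mxtens_index m n).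
Proof. exact: can_inj (@mxtens_indexK m n). Qed.

Section Tensor.
Variable K : comPzRingType.

Lemma tens_suml (I : finType) m n p q (F : I -> 'M[K]_(m, n)) (B : 'M[K]_(p, q)) :
  (\sum_i F i) *t B = \sum_i (F i *t B).
Proof.
apply/matrixP => a b; rewrite !mxE !summxE mulr_suml.
by apply: eq_bigr => i _; rewrite !mxE.
Qed.

Lemma tens_sumr (I : finType) m n p q (A : 'M[K]_(m, n)) (F : I -> 'M[K]_(p, q)) :
  A *t (\sum_i F i) = \sum_i (A *t F i).
Proof.
apply/matrixP => a b; rewrite !mxE !summxE mulr_sumr.
by apply: eq_bigr => i _; rewrite !mxE.
Qed.

Lemma tensZl m n p q c (A : 'M[K]_(m, n)) (B : 'M[K]_(p, q)) :
  (c *: A) *t B = c *: (A *t B).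
Proof. by apply/matrixP => a b; rewrite !mxE mulrA. Qed.

Lemma tensZr m n p q c (A : 'M[K]_(m, n)) (B : 'M[K]_(p, q)) :
  A *t (c *: B) = c *: (A *t B).
Proof. by apply/matrixP => a b; rewrite !mxE mulrCA. Qed.

Lemma tens_delta_mx m n p q (i : 'I_m) (j : 'I_n) (k : 'I_p) (l : 'I_q) :
  delta_mx i j *t delta_mx k l =
  delta_mx (mxtens_index (i, k)) (mxtens_index (j, l)) :> 'M[K]_(m * p, n * q).
Proof.
apply/matrixP => a b.
case: (mxtens_indexP a) => a1 a2; case: (mxtens_indexP b) => b1 b2.
rewrite tensmxE !mxE !(inj_eq (@mxtens_index_inj _ _)) !xpair_eqE.
by rewrite -natrM mulnb andbACA.
Qed.

Lemma tens_delta_suml m n p q (A : 'M[K]_(m, n)) (k : 'I_p) (l : 'I_q) :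
  A *t delta_mx k l =
  \sum_i \sum_j A i j *: delta_mx (mxtens_index (i, k)) (mxtens_index (j, l)).
Proof.
rewrite {1}[A]matrix_sum_delta tens_suml; apply: eq_bigr => i _.
by rewrite tens_suml; apply: eq_bigr => j _; rewrite tensZl tens_delta_mx.
Qed.

Lemma tens_delta_sumr m n p q (i : 'I_m) (j : 'I_n) (A : 'M[K]_(p, q)) :
  delta_mx i j *t A =
  \sum_k \sum_l A k l *: delta_mx (mxtens_index (i, k)) (mxtens_index (j, l)).
Proof.
rewrite {1}[A]matrix_sum_delta tens_sumr; apply: eq_bigr => k _.
by rewrite tens_sumr; apply: eq_bigr => l _; rewrite tensZr tens_delta_mx.
Qed.

End Tensor.

Section Encoding.
Variable R : realType.
Local Notation C := R[i].
Variables (M Y S : finType) (dE : nat) (g : S -> M -> Y -> Y).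

(* Basis-index versions of the isometries: [idxESC (s, c)] sends e to e (x) s (x) c and
   [idxMESC s] sends (m, y) (x) e to m (x) (e (x) s (x) g_s(m, y)); [injmx] turns them
   into matrices. *)
Definition idxESC (sc : S * Y) (e : 'I_dE) : 'I_(dE * #|S| * #|Y|) :=
  mxtens_index (mxtens_index (e, enum_rank sc.1), enum_rank sc.2).

Definition idxMESC (s : S) (j : 'I_(#|{: M * Y}| * dE)) :
    'I_(#|M| * (dE * #|S| * #|Y|)) :=
  let x := enum_val (mxtens_unindex j).1 in
  mxtens_index (enum_rank x.1, idxESC (s, g s x.1 x.2) (mxtens_unindex j).2).

Lemma idxMESC_E s (x : M * Y) e :
  idxMESC s (mxtens_index (enum_rank x, e)) =
  mxtens_index (enum_rank x.1, idxESC (s, g s x.1 x.2) e).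
Proof. by rewrite /idxMESC mxtens_indexK /= enum_rankK. Qed.

Lemma idxESC_inj a b e e' : (idxESC a e == idxESC b e') = (a == b) && (e == e').
Proof.
case: a b => s c [t c'].
rewrite !(inj_eq (@mxtens_index_inj _ _), xpair_eqE, inj_eq enum_rank_inj) /=.
by case: (e == e'); case: (s == t); case: (c == c').
Qed.

Hypothesis g_inj : forall s m, injective (g s m).

Lemma idxMESC_inj s t j j' : (idxMESC s j == idxMESC t j') = (s == t) && (j == j').
Proof.
apply/eqP/andP => [|[/eqP <- /eqP <-] //].
case: (mxtens_indexP j) => a e; case: (mxtens_indexP j') => a' e'.
rewrite -(enum_valK a) -(enum_valK a') !idxMESC_E.
case: (enum_val a) (enum_val a') => m y [m' y'] /= /eqP E.
rewrite (inj_eq (@mxtens_index_inj _ _)) xpair_eqE (inj_eq enum_rank_inj) in E.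
rewrite idxESC_inj xpair_eqE in E.
by case/and3P: E => /eqP <- /andP[/eqP <- /eqP /g_inj <-] /eqP <-; rewrite !eqxx.
Qed.

Local Notation VESC := (fun sc => injmx R (idxESC sc)).
Local Notation VMESC := (fun s => injmx R (idxMESC s)).

Lemma sandwich_VESC s c (A : 'M[C]_dE) :
  sandwich (VESC (s, c)) A = (A *t ketbra s) *t ketbra c.
Proof.
rewrite sandwich_injmx /ketbra (tens_delta_suml A) tens_suml; apply: eq_bigr => e _.
by rewrite tens_suml; apply: eq_bigr => e' _; rewrite tensZl tens_delta_mx.
Qed.

Lemma sandwich_VMESC s (x : M * Y) (A : 'M[C]_dE) :
  sandwich (VMESC s) (ketbra x *t A) =
  ketbra x.1 *t sandwich (VESC (s, g s x.1 x.2)) A.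
Proof.
rewrite {1}/ketbra tens_delta_sumr linear_sum sandwich_injmx tens_sumr.
apply: eq_bigr => e _; rewrite linear_sum tens_sumr; apply: eq_bigr => e' _.
by rewrite linearZ /= tensZr sandwich_injmx_delta tens_delta_mx !idxMESC_E.
Qed.

Lemma isomix_cq (rho : M -> Y -> 'M[C]_dE) (c : C) :
  isomix VMESC (\sum_(x : M * Y) c *: (ketbra x *t rho x.1 x.2)) =
  \sum_m \sum_y \sum_s (c / #|S|%:R) *:
    (ketbra m *t ((rho m y *t ketbra s) *t ketbra (g s m y))).
Proof.
rewrite linear_sum [RHS]pair_big /=; apply: eq_bigr => x _.
rewrite linearZ /= /isomix scaler_sumr; apply: eq_bigr => s _.
by rewrite sandwich_VMESC sandwich_VESC scalerA.
Qed.

Lemma isomix_unif (sigma : 'M[C]_dE) :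
  isomix VMESC (unif_op (M * Y)%type *t sigma) = unif_op M *t isomix VESC sigma.
Proof.
rewrite /unif_op tens_suml; under eq_bigr do rewrite tensZl.
rewrite (isomix_cq (fun _ _ => sigma)) tens_suml; apply: eq_bigr => m _.
have relabel_inj : injective (fun p : S * Y => (p.1, g p.1 m p.2)).
  by move=> [s y] [t y'] /= [<- /g_inj ->].
rewrite tensZl /isomix tens_sumr scaler_sumr exchange_big [LHS]pair_big /=.
rewrite [RHS](reindex_inj relabel_inj); apply: eq_bigr => -[s y] _ /=.
rewrite sandwich_VESC tensZr scalerA; congr (_ *: _).
by rewrite !card_prod !natrM !invfM mulrAC -mulrA.
Qed.

End Encoding.

Lemma dunif_le (R : realType) (V V' : finType) n n'
    (rho : 'M[R[i]]_(#|V| * n)) (rho' : 'M[R[i]]_(#|V'| * n')) :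
  (exists sigma : 'M[R[i]]_n, density sigma) ->
  (forall sigma, density sigma -> exists2 sigma' : 'M[R[i]]_n', density sigma' &
     trnorm (rho' - unif_op V' *t sigma') <= trnorm (rho - unif_op V *t sigma)) ->
  dunif rho' <= dunif rho.
Proof.
move=> [sigma0 sigma0_density] transfer.
have lbound : has_lbound [set x : R | exists sigma' : 'M[R[i]]_n',
    density sigma' /\ x = trnorm (rho' - unif_op V' *t sigma')].
  by exists 0 => _ [sigma' [_ ->]]; apply: trnorm_ge0.
apply: lb_le_inf; first by exists (trnorm (rho - unif_op V *t sigma0)), sigma0.
move=> _ [sigma [sigma_density ->]].
have [sigma' sigma'_density le_sigma] := transfer sigma sigma_density.
by apply: le_trans le_sigma; apply: (ge_inf lbound); exists sigma'.
Qed.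

Unset Implicit Arguments.
Set Strict Implicit.

Theorem lemma3 (R : realType) (Mset Yset Sset : finType) (dE : nat)
    (g : Sset -> Mset -> Yset -> Yset)
    (rhoE : Mset -> Yset -> 'M[R[i]]_dE) :
  (0 < #|Mset|)%N -> (0 < #|Yset|)%N -> (0 < #|Sset|)%N ->
  (* (i) collision probability over uniform S' is at most 1/|Y| *)
  (forall (m : Mset) (y : Yset) (m' : Mset) (y' : Yset), (m, y) != (m', y') ->
      (#|[set s : Sset | g s m y == g s m' y']|%:R / #|Sset|%:R : R)
        <= (#|Yset|%:R)^-1) ->
  (* (ii) for all m, c, s' there is a unique y with g_{s'}(m,y) = c *)
  (forall (m : Mset) (c : Yset) (s : Sset), exists! y : Yset, g s m y = c) ->
  (* the conditional states rho_{E'}^{m,y} are density operators *)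
  (forall (m : Mset) (y : Yset), density (rhoE m y)) ->
  let rhoMpE : 'M[R[i]]_(#|{: Mset * Yset}| * dE) :=
    \sum_(my : Mset * Yset)
       (#|Mset|%:R * #|Yset|%:R)^-1 *: (ketbra my *t rhoE my.1 my.2) in
  let rhoMESC : 'M[R[i]]_(#|Mset| * ((dE * #|Sset|) * #|Yset|)) :=
    \sum_(m : Mset) \sum_(y : Yset) \sum_(s : Sset)
       (#|Mset|%:R * #|Yset|%:R * #|Sset|%:R)^-1 *:
         (ketbra m *t ((rhoE m y *t ketbra s) *t ketbra (g s m y))) in
  dunif rhoMESC <= dunif rhoMpE.
Proof.
move=> M_gt0 Y_gt0 S_gt0 _ g_bij rho_density.
have g_inj s m : injective (g s m).
  move=> y y' gy; have [y0 [_ y0_uniq]] := g_bij m (g s m y) s.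
  by rewrite -(y0_uniq y erefl) -(y0_uniq y' (esym gy)).
have VMESC_orth := injmx_orth R (@idxMESC_inj Mset Yset Sset dE g g_inj).
have VESC_orth := injmx_orth R (@idxESC_inj Yset Sset dE).
apply: dunif_le.
  case/card_gt0P: M_gt0 => m _; case/card_gt0P: Y_gt0 => y _.
  by exists (rhoE m y).
move=> sigma [sigma_psd sigma_tr].
exists (isomix (fun sc => injmx R (idxESC sc)) sigma).
  split; first exact: isomix_psd.
  by rewrite isomix_tr // card_prod muln_gt0 S_gt0.
rewrite -(trnorm_isomix VMESC_orth _ S_gt0) linearB /= isomix_unif //.
by rewrite isomix_cq // invfM.
Qed.
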